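(* Let $t\mapsto\zeta(t)=(\xi(t),\eta(t),s(t))$, $t\in I$, be a solution of the relaxed system (R) such that for all $t\in I$: $\epsilon(t)\neq0$, $n^j(t)\neq0$ and $\partial_Tf_{\mathrm{hl}}(T^j(t),\mathbf x^j(t))\neq0$ for $j=1,\dots,S$, and $f_{\mathrm{holdup}}'(L^j(t))\neq0$ for $j=1,\dots,S-1$. Then the Jacobian $D_{(\eta,s)}g(\zeta(t))$ is non-singular for every $t\in I$ if and only if $s^1(t),\dots,s^S(t)\neq0$ for every $t\in I$.
   Context: Fix integers $S\ge 2$, $C\ge 2$ and an interval $I\subset\mathbb R$. Given are continuously differentiable real functions $f_{\mathrm{vle},i}(P,T,\mathbf x)$ ($i=1,\dots,C$), $f_{\mathrm{hl}}(T,\mathbf x)$, $f_{\mathrm{hv}}(T,\mathbf y)$, $f_{\mathrm{holdup}}(L)$. Controls are continuously differentiable real functions $\epsilon,P,Q,T^{\mathrm{cond}}$ on $I$. State variables: $n^j,H^j,T^j,V^j,s^j$, $\mathbf x^j,\mathbf y^j\in\mathbb R^C$ ($j=1,\dots,S$), $L^j$ ($j=1,\dots,S-1$); a solution is a tuple of continuously differentiable state functions satisfying all equations at every $t\in I$. ''$2\le j\le S-1$'' marks middle-stage equations. The relaxed system (R) consists of: (TM) $\dot n^1=L^1-V^1$; $\dot n^j=L^j-V^j-L^{j-1}+V^{j-1}$ ($2\le j\le S-1$); $\dot n^S=-\epsilon V^S-L^{S-1}+V^{S-1}$; (CM$_0$) for $i=1,\dots,C-1$: $\dot x_i^1=\big(L^1(x_i^2-x_i^1)-V^1(y_i^1-x_i^1)\big)/n^1$;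 $\dot x_i^j=\big(L^j(x_i^{j+1}-x_i^j)-V^j(y_i^j-x_i^j)+V^{j-1}(y_i^{j-1}-x_i^j)\big)/n^j$ ($2\le j\le S-1$); $\dot x_i^S=\big(\epsilon V^S(x_i^S-y_i^S)+V^{S-1}(y_i^{S-1}-x_i^S)\big)/n^S$; (EB) $\dot H^1=L^1f_{\mathrm{hl}}(T^2,\mathbf x^2)-V^1f_{\mathrm{hv}}(T^1,\mathbf y^1)+Q$; $\dot H^j=L^jf_{\mathrm{hl}}(T^{j+1},\mathbf x^{j+1})-V^jf_{\mathrm{hv}}(T^j,\mathbf y^j)-L^{j-1}f_{\mathrm{hl}}(T^j,\mathbf x^j)+V^{j-1}f_{\mathrm{hv}}(T^{j-1},\mathbf y^{j-1})$ ($2\le j\le S-1$); $\dot H^S=(1-\epsilon)V^Sf_{\mathrm{hl}}(T^{\mathrm{cond}},\mathbf y^S)-V^Sf_{\mathrm{hv}}(T^S,\mathbf y^S)-L^{S-1}f_{\mathrm{hl}}(T^S,\mathbf x^S)+V^{S-1}f_{\mathrm{hv}}(T^{S-1},\mathbf y^{S-1})$; and the algebraic equations $g=0$, with $\mathrm{aux}^1_0=\sum_{i=1}^C\big(L^1(x_i^2-x_i^1)-V^1(y_i^1-x_i^1)\big)/n^1$; for $2\le j\le S-1$, $\mathrm{aux}^j_0=\sum_{i=1}^C\big(L^j(x_i^{j+1}-x_i^j)-V^j(y_i^j-x_i^j)+V^{j-1}(y_i^{j-1}-x_i^j)\big)/n^j$; $\mathrm{aux}^S_0=\sum_{i=1}^C\big(\epsilon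 V^S(x_i^S-y_i^S)+V^{S-1}(y_i^{S-1}-x_i^S)\big)/n^S$; $\mathrm{slack}^j=\sum_{i=1}^Cy_i^j-1-s^j$; $\mathrm{ydef}_i^j=y_i^j-f_{\mathrm{vle},i}(P,T^j,\mathbf x^j)$, $\mathbf{ydef}^j=(\mathrm{ydef}_1^j,\dots,\mathrm{ydef}_C^j)$; $\mathrm{edef}^j=H^j-n^jf_{\mathrm{hl}}(T^j,\mathbf x^j)$; $\mathrm{xsum}^j=x_C^j-1+\sum_{i=1}^{C-1}x_i^j$; $\mathrm{hold}^j=n^j-f_{\mathrm{holdup}}(L^{j-1})$ ($j=2,\dots,S$); collected as $g=(\mathrm{aux}^S_0,\dots,\mathrm{aux}^1_0,\mathrm{slack}^1,\dots,\mathrm{slack}^S,\mathbf{ydef}^1,\dots,\mathbf{ydef}^S,\mathrm{edef}^1,\dots,\mathrm{edef}^S,\mathrm{xsum}^1,\dots,\mathrm{xsum}^S,\mathrm{hold}^2,\dots,\mathrm{hold}^S)$. Differential variables $\xi=(n^1,\dots,n^S,\hat{\mathbf x}^1,\dots,\hat{\mathbf x}^S,H^1,\dots,H^S)$, $\hat{\mathbf x}^j=(x^j_1,\dots,x^j_{C-1})$; algebraic variables $(\eta,s)=(V^S,\dots,V^1,s^1,\dots,s^S,\mathbf y^1,\dots,\mathbf y^S,T^1,\dots,T^S,x_C^1,\dots,x_C^S,L^1,\dots,L^{S-1})$. $D_{(\eta,s)}g$ is the Jacobian of $g$ with respect to $(\eta,s)$ (with $\xi$ and controls held fixed). *)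

From mathcomp Require Import all_boot all_order all_algebra.
From mathcomp Require Import all_classical all_reals all_analysis.
Set Implicit Arguments. Unset Strict Implicit. Unset Printing Implicit Defensive.
Import Order.TTheory GRing.Theory Num.Theory.
Import numFieldNormedType.Exports.
Local Open Scope classical_set_scope.
Local Open Scope ring_scope.

Section Defs.
Variable R : realType.

(** nat-indexed (0-based) access to vectors/matrices; 0 out of range. *)
Definition vat n (v : 'rV[R]_n) (k : nat) : R :=
  if insub k is Some i then v ord0 i else 0.
Definition mat m n (M : 'M[R]_(m, n)) (a b : nat) : R :=
  if insub a is Some i then (if insub b is Some j then M i j else 0) else 0.

Definition deriv_on (I : set R) (f f' : R -> R) : Prop :=
  forall t, I t ->
    cvg_to ((fun h : R => h^-1 * (f (t + h) - f t)) @
              within (fun h : R => h != 0 /\ I (t + h)) (nbhs (0 : R)))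
           (nbhs (f' t)).

Definition C1_on (I : set R) (f : R -> R) : Prop :=
  exists f' : R -> R, deriv_on I f f' /\ {within I, continuous f'}.

Definition C1 (U V : normedModType R) (f : U -> V) : Prop :=
  (forall p, differentiable f p) /\ (forall v : U, continuous (fun p => 'd f p v)).

(** Space of algebraic variables (eta, s):
    (V, s, y, T, x_C, L) with V,s,T,x_C in R^S, y in R^(S x C) (row j-1 = y^j),
    L in R^(S-1).  Stage j (1-based) is stored at index j-1. *)
Definition Alg (S C : nat) :=
  ('rV[R]_S * 'rV[R]_S * 'M[R]_(S, C) * 'rV[R]_S * 'rV[R]_S * 'rV[R]_(S.-1))%type.
(** Space of algebraic equations:
    (aux_0, slack, ydef, edef, xsum, hold), hold^j (j = 2..S) stored at index j-2. *)
Definition Eqs (S C : nat) :=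
  ('rV[R]_S * 'rV[R]_S * 'M[R]_(S, C) * 'rV[R]_S * 'rV[R]_S * 'rV[R]_(S.-1))%type.

Variables (S C : nat).
Variable f_vle : nat -> (R * R * 'rV[R]_C)%type -> R.   (* f_vle,i(P,T,x), i = 1..C *)
Variable f_hl : (R * 'rV[R]_C)%type -> R.
Variable f_hv : (R * 'rV[R]_C)%type -> R.
Variable f_holdup : R -> R.

(** The algebraic part g of system (R), as a function of the algebraic
    variables z = (eta, s), with the differential variables xi = (n, x^, H)
    and the controls eps, P held fixed.
    n j, H j (j = 1..S) and xh j i (j = 1..S, i = 1..C-1) are the values of the
    differential variables (xh j C is never used: x_C^j is algebraic). *)
Definition galg (n : nat -> R) (xh : nat -> nat -> R) (H : nat -> R)
    (eps P : R) (z : Alg S C) : Eqs S C :=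
  let: (Vv, sv, ym, Tv, xCv, Lv) := z in
  let V j := vat Vv j.-1 in
  let s j := vat sv j.-1 in
  let T j := vat Tv j.-1 in
  let L j := vat Lv j.-1 in
  let y j i := mat ym j.-1 i.-1 in
  let x j i := if i == C then vat xCv j.-1 else xh j i in
  let xr j := \row_(i < C) x j i.+1 in
  let yr j := \row_(i < C) y j i.+1 in
  let aux j :=
    if j == 1%N then
      (\sum_(i < C) (L 1 * (x 2 i.+1 - x 1 i.+1) - V 1 * (y 1 i.+1 - x 1 i.+1))) / n 1
    else if j == S then
      (\sum_(i < C) (eps * V S * (x S i.+1 - y S i.+1)
                      + V S.-1 * (y S.-1 i.+1 - x S i.+1))) / n S
    else
      (\sum_(i < C) (L j * (x j.+1 i.+1 - x j i.+1) - V j * (y j i.+1 - x j i.+1)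
                      + V j.-1 * (y j.-1 i.+1 - x j i.+1))) / n j in
  ( \row_(k < S) aux k.+1,
    \row_(k < S) (\sum_(i < C) y k.+1 i.+1 - 1 - s k.+1),
    \matrix_(k < S, i < C) (y k.+1 i.+1 - f_vle i.+1 (P, T k.+1, xr k.+1)),
    \row_(k < S) (H k.+1 - n k.+1 * f_hl (T k.+1, xr k.+1)),
    \row_(k < S) (x k.+1 C - 1 + \sum_(i < C | (i < C.-1)%N) x k.+1 i.+1),
    \row_(k < S.-1) (n k.+2 - f_holdup (L k.+1)) ).

Definition zeta_alg (V s T L : nat -> R -> R) (x y : nat -> nat -> R -> R) (t : R)
    : Alg S C :=
  ( \row_(k < S) V k.+1 t, \row_(k < S) s k.+1 t,
    \matrix_(k < S, i < C) y k.+1 i.+1 t, \row_(k < S) T k.+1 t,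
    \row_(k < S) x k.+1 C t, \row_(k < S.-1) L k.+1 t ).

Definition solution_R (I : set R) (eps P Q Tcond : R -> R)
    (n H T V s : nat -> R -> R) (x y : nat -> nat -> R -> R) (L : nat -> R -> R)
    : Prop :=
  let xr j t := \row_(i < C) x j i.+1 t in
  let yr j t := \row_(i < C) y j i.+1 t in
  (forall j, (1 <= j <= S)%N ->
     [/\ C1_on I (n j), C1_on I (H j), C1_on I (T j), C1_on I (V j) & C1_on I (s j)])
  /\ (forall j i, (1 <= j <= S)%N -> (1 <= i <= C)%N -> C1_on I (x j i) /\ C1_on I (y j i))
  /\ (forall j, (1 <= j <= S.-1)%N -> C1_on I (L j))
  /\ deriv_on I (n 1%N) (fun t => L 1%N t - V 1%N t)
  /\ (forall j, (2 <= j <= S.-1)%N ->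
        deriv_on I (n j) (fun t => L j t - V j t - L j.-1 t + V j.-1 t))
  /\ deriv_on I (n S) (fun t => - eps t * V S t - L S.-1 t + V S.-1 t)
  /\ (forall i, (1 <= i <= C.-1)%N ->
     [/\ deriv_on I (x 1%N i) (fun t =>
            (L 1%N t * (x 2%N i t - x 1%N i t) - V 1%N t * (y 1%N i t - x 1%N i t))
              / n 1%N t),
         (forall j, (2 <= j <= S.-1)%N ->
            deriv_on I (x j i) (fun t =>
              (L j t * (x j.+1 i t - x j i t) - V j t * (y j i t - x j i t)
                 + V j.-1 t * (y j.-1 i t - x j i t)) / n j t))
       & deriv_on I (x S i) (fun t =>
            (eps t * V S t * (x S i t - y S i t) + V S.-1 t * (y S.-1 i t - x S i t))
              / n S t)])
  /\ deriv_on I (H 1%N) (fun t =>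
        L 1%N t * f_hl (T 2%N t, xr 2%N t) - V 1%N t * f_hv (T 1%N t, yr 1%N t) + Q t)
  /\ (forall j, (2 <= j <= S.-1)%N ->
        deriv_on I (H j) (fun t =>
          L j t * f_hl (T j.+1 t, xr j.+1 t) - V j t * f_hv (T j t, yr j t)
          - L j.-1 t * f_hl (T j t, xr j t) + V j.-1 t * f_hv (T j.-1 t, yr j.-1 t)))
  /\ deriv_on I (H S) (fun t =>
        (1 - eps t) * V S t * f_hl (Tcond t, yr S t) - V S t * f_hv (T S t, yr S t)
        - L S.-1 t * f_hl (T S t, xr S t) + V S.-1 t * f_hv (T S.-1 t, yr S.-1 t))
  /\ (forall t, I t ->
        galg (fun j => n j t) (fun j i => x j i t) (fun j => H j t) (eps t) (P t)
             (zeta_alg V s T L x y t) = 0).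

End Defs.

(* The Jacobian of g with respect to (eta, s) is triangular up to one
   bidiagonal block.  Linearising the algebraic equations at a point with
   g = 0, the rows xsum, hold, edef, ydef and slack determine in turn the
   increments of x_C, L, T, y and s, each through a factor that the
   hypotheses keep nonzero (1, f_holdup', n^j d_T f_hl, 1, 1).  With these
   increments gone and using g = 0 (sum_i y^j_i = 1 + s^j, sum_i x^j_i = 1),
   the row aux^j becomes (V^(j-1) s^(j-1) - c_j V^j s^j) / n^j, where c_S is
   epsilon and c_j = 1 otherwise: a lower bidiagonal system in the products
   V^j s^j.  Hence the kernel is trivial when every s^j is nonzero, whereas
   if s^j0 = 0 the unit vector in the direction V^j0 lies in the kernel, both
   entries of its column being multiples of s^j0. *)

From HB Require Import structures.
From mathcomp Require Import all_boot all_order all_algebra.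
From mathcomp Require Import all_classical all_reals all_analysis.
From mathcomp Require Import ring lra zify.
Set Implicit Arguments. Unset Strict Implicit. Unset Printing Implicit Defensive.
Import Order.TTheory GRing.Theory Num.Theory.
Import numFieldNormedType.Exports.
Local Open Scope ring_scope.

Section Calculus.
Context {R : realType} {U : normedModType R}.

Lemma differentiable_fst (A B : normedModType R) (G : U -> A * B) p :
  differentiable G p -> differentiable (fun z => (G z).1) p.
Proof.
move=> dG; apply: (@differentiable_comp _ _ _ _ G (@fst A B)) => //.
by apply: linear_differentiable => q; exact: cvg_fst.
Qed.

Lemma differentiable_snd (A B : normedModType R) (G : U -> A * B) p :
  differentiable G p -> differentiable (fun z => (G z).2) p.
Proof.
move=> dG; apply: (@differentiable_comp _ _ _ _ G (@snd A B)) => //.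
by apply: linear_differentiable => q; exact: cvg_snd.
Qed.

Lemma differentiable_entry m n (G : U -> 'M[R]_(m, n)) p i j :
  differentiable G p -> differentiable (fun z => G z i j) p.
Proof.
move=> dG; apply: (@differentiable_comp _ _ _ _ G (fun M : 'M[R]_(m, n) => M i j)) => //.
exact: differentiable_coord.
Qed.

Lemma diff_entry m n (G : U -> 'M[R]_(m, n)) p v i j :
  differentiable G p -> 'd G p v i j = 'd (fun z => G z i j) p v.
Proof.
move=> dG.
have entry_linear : linear (fun M : 'M[R]_(m, n) => M i j : R^o).
  by move=> a M N; rewrite !mxE.
pose entry : {linear 'M[R]_(m, n) -> R^o} :=
  HB.pack (fun M : 'M[R]_(m, n) => M i j) (GRing.isLinear.Build _ _ _ _ _ entry_linear).
have entry_cont : continuous entry by exact: coord_continuous.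
have -> : (fun z => G z i j) = entry \o G by [].
rewrite (@diff_comp _ _ _ _ G entry) //; last exact: linear_differentiable.
by rewrite diff_lin.
Qed.

Lemma differentiable_matrix m n (F : U -> 'I_m -> 'I_n -> R) p :
  (forall i j, differentiable (fun z => F z i j) p) ->
  differentiable (fun z => \matrix_(i, j) F z i j) p.
Proof.
move=> dF.
have -> : (fun z => \matrix_(i, j) F z i j) =
          \sum_i \sum_j (fun z => F z i j *: delta_mx i j).
  apply: funext => z; rewrite (matrix_sum_delta (\matrix_(i, j) F z i j)).
  by rewrite fct_sumE; apply: eq_bigr => i _; rewrite fct_sumE;
     apply: eq_bigr => j _; rewrite mxE.
by apply: differentiable_sum => i; apply: differentiable_sum => j;
   exact: differentiableZl.
Qed.

Lemma diff_matrix m n (F : U -> 'I_m -> 'I_n -> R) p v :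
  (forall i j, differentiable (fun z => F z i j) p) ->
  'd (fun z => \matrix_(i, j) F z i j) p v = \matrix_(i, j) 'd (fun z => F z i j) p v.
Proof.
move=> dF; apply/matrixP => i j.
rewrite mxE diff_entry; last exact: differentiable_matrix.
by congr ('d _ p v); apply: funext => z; rewrite mxE.
Qed.

Lemma differentiable_bigsum n (P : pred 'I_n) (F : 'I_n -> U -> R) p :
  (forall i, P i -> differentiable (F i) p) ->
  differentiable (fun z => \sum_(i < n | P i) F i z) p.
Proof.
move=> dF; have -> : (fun z => \sum_(i < n | P i) F i z) =
                     \sum_(i < n) (fun z => if P i then F i z else 0).
  by apply: funext => z; rewrite fct_sumE big_mkcond.
apply: differentiable_sum => i; case: (P i) (dF i) => [dFi|_]; first exact: dFi.
exact: differentiable_cst.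
Qed.

Lemma diff_line (f : U -> R) p v :
  differentiable f p -> 'd f p v = derive1 (fun h => f (h *: v + p)) 0.
Proof.
move=> df; rewrite -deriveE // derive1E /derive /= scale0r add0r.
by under [in RHS]eq_fun do rewrite addr0 [_%:A]mulr1.
Qed.

Lemma derive1_affine (a b x : R) : derive1 (fun h : R => a + h * b) x = b.
Proof.
rewrite derive1E deriveD // derive_cst add0r deriveMr //.
by rewrite derive_id mulr1.
Qed.

Lemma diff_affine_line (f : U -> R) p v b :
  differentiable f p -> (forall h, f (h *: v + p) = f p + h * b) -> 'd f p v = b.
Proof.
move=> df fline; rewrite diff_line //.
have -> : (fun h => f (h *: v + p)) = (fun h => f p + h * b) by exact: funext.
exact: derive1_affine.
Qed.

Lemma derive1_affine_comp (f : R -> R) a b c k : differentiable f a ->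
  derive1 (fun h => c - k * f (a + h * b)) 0 = - (k * (b * derive1 f a)).
Proof.
move=> df.
have dline : differentiable (fun h : R => a + h * b) 0.
  by apply: differentiableD => //; apply: differentiableM.
have dfa : differentiable f ((fun h : R => a + h * b) 0) by rewrite mul0r addr0.
have dF := (derivable1_diffP _ _).2 (differentiable_comp dline dfa).
rewrite derive1E (deriveB (derivable_cst c _ _) (derivableM (derivable_cst k _ _) dF)).
rewrite derive_cst sub0r (deriveMl _ dF) -derive1E.
rewrite (derive1_comp ((derivable1_diffP _ _).2 dline) ((derivable1_diffP _ _).2 dfa)).
by rewrite derive1_affine mul0r addr0; ring.
Qed.
End Calculus.

Lemma linear_bijective_of_ker0 (K : fieldType) (V : vectType K) (f : {linear V -> V}) :
  (forall v, f v = 0 -> v = 0) -> bijective f.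
Proof.
move=> ker0; pose F : 'End(V) := linfun f.
have injF : lker F == 0%VS.
  apply/lker0P => u w; rewrite !lfunE => /eqP; rewrite -subr_eq0 -linearB.
  by move=> /eqP /ker0 /eqP; rewrite subr_eq0 => /eqP.
have FE u : F u = f u by rewrite lfunE.
by exists F^-1%VF => u; rewrite -FE ?lker0_lfunK ?lker0_lfunVK.
Qed.

Section IndexedAccess.
Context {R : realType}.

Lemma vatE m (a : 'rV[R]_m) (k : 'I_m) : vat a k = a ord0 k.
Proof.
rewrite /vat; case: insubP => [u _ uk|]; last by rewrite ltn_ord.
by congr (a ord0 _); apply: val_inj.
Qed.

Lemma matE m n (a : 'M[R]_(m, n)) (i : 'I_m) (j : 'I_n) : mat a i j = a i j.
Proof.
rewrite /mat; case: insubP => [u _ ui|]; last by rewrite ltn_ord.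
case: insubP => [u' _ uj|]; last by rewrite ltn_ord.
by congr (a _ _); apply: val_inj.
Qed.

Lemma vat0 m k : vat (0 : 'rV[R]_m) k = 0.
Proof. by rewrite /vat; case: insub => [i|] //; rewrite mxE. Qed.

Lemma mat0 m n a b : mat (0 : 'M[R]_(m, n)) a b = 0.
Proof. by rewrite /mat; case: insub => [i|] //; case: insub => [j|] //; rewrite mxE. Qed.

Lemma vat_line m (a b : 'rV[R]_m) h k : vat (h *: a + b) k = h * vat a k + vat b k.
Proof. by rewrite /vat; case: insub => [i|]; rewrite ?mxE // mulr0 addr0. Qed.

Lemma mat_line m n (a b : 'M[R]_(m, n)) h i j :
  mat (h *: a + b) i j = h * mat a i j + mat b i j.
Proof.
by rewrite /mat; case: insub => [i'|]; [case: insub => [j'|]|]; rewrite ?mxE // mulr0 addr0.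
Qed.

Lemma vat_row m (f : nat -> R) k : (k < m)%N -> vat (\row_(i < m) f i) k = f k.
Proof. by move=> km; rewrite /vat insubT mxE. Qed.

Lemma differentiable_vat (U : normedModType R) m (G : U -> 'rV[R]_m) p k :
  differentiable G p -> differentiable (fun z => vat (G z) k) p.
Proof.
move=> dG; rewrite /vat; case: insub => [i|]; last exact: differentiable_cst.
exact: differentiable_entry.
Qed.

Lemma differentiable_mat (U : normedModType R) m n (G : U -> 'M[R]_(m, n)) p a b :
  differentiable G p -> differentiable (fun z => mat (G z) a b) p.
Proof.
move=> dG; rewrite /mat; case: insub => [i|]; last exact: differentiable_cst.
case: insub => [j|]; last exact: differentiable_cst.
exact: differentiable_entry.
Qed.

End IndexedAccess.

Lemma bidiagonal_eq0 (K : idomainType) (c w : nat -> K) N :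
  (forall j, (1 <= j <= N)%N -> c j != 0) ->
  (forall j, (1 <= j <= N)%N -> c j * w j = if j == 1%N then 0 else w j.-1) ->
  forall j, (1 <= j <= N)%N -> w j = 0.
Proof.
move=> c0 eqs; elim=> [//|j IH] /andP[_ jN].
have hj : (1 <= j.+1 <= N)%N by rewrite jN.
have : c j.+1 * w j.+1 == 0.
  rewrite eqs //; case: j IH jN {hj} => [|j] IH jN //=.
  by rewrite IH //; exact: ltnW.
by rewrite mulf_eq0 (negbTE (c0 _ hj)) => /eqP.
Qed.

Lemma sum_split_last (V : nmodType) n (F : nat -> V) : (0 < n)%N ->
  \sum_(i < n) F i.+1 = F n + \sum_(i < n | (i < n.-1)%N) F i.+1.
Proof.
case: n => [//|c] _ /=.
rewrite big_ord_recr /= [in RHS]big_mkcond big_ord_recr /= ltnn addr0 addrC.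
by congr (_ + _); apply: eq_bigr => i _; rewrite ltn_ord.
Qed.

Section Jacobian.
Variables (R : realType) (S C : nat).
Variable f_vle : nat -> (R * R * 'rV[R]_C)%type -> R.
Variables (f_hl : (R * 'rV[R]_C)%type -> R) (f_holdup : R -> R).
Variables (nn : nat -> R) (xh : nat -> nat -> R) (HH : nat -> R) (e P0 : R).
Implicit Types z v : Alg R S C.

Definition zV z j := vat z.1.1.1.1.1 j.-1.
Definition zs z j := vat z.1.1.1.1.2 j.-1.
Definition zy z j i := mat z.1.1.1.2 j.-1 i.-1.
Definition zT z j := vat z.1.1.2 j.-1.
Definition zxC z j := vat z.1.2 j.-1.
Definition zL z j := vat z.2 j.-1.
(* Only x^j_C is algebraic; the other mole fractions are the frozen
   differential variables [xh]. *)
Definition zx z j i := if i == C then zxC z j else xh j i.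
Definition zxr z j := \row_(i < C) zx z j i.+1.

Definition aux z j :=
  if j == 1%N then
    (\sum_(i < C) (zL z 1 * (zx z 2 i.+1 - zx z 1 i.+1)
                    - zV z 1 * (zy z 1 i.+1 - zx z 1 i.+1))) / nn 1
  else if j == S then
    (\sum_(i < C) (e * zV z S * (zx z S i.+1 - zy z S i.+1)
                    + zV z S.-1 * (zy z S.-1 i.+1 - zx z S i.+1))) / nn S
  else
    (\sum_(i < C) (zL z j * (zx z j.+1 i.+1 - zx z j i.+1) - zV z j * (zy z j i.+1 - zx z j i.+1)
                    + zV z j.-1 * (zy z j.-1 i.+1 - zx z j i.+1))) / nn j.
Definition slack z j := \sum_(i < C) zy z j i.+1 - 1 - zs z j.
Definition ydef z j i := zy z j i - f_vle i (P0, zT z j, zxr z j).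
Definition edef z j := HH j - nn j * f_hl (zT z j, zxr z j).
Definition xsum z j := zx z j C - 1 + \sum_(i < C | (i < C.-1)%N) zx z j i.+1.
Definition hold z j := nn j.+1 - f_holdup (zL z j).

Definition gmap z : Eqs R S C :=
  ( \row_(k < S) aux z k.+1, \row_(k < S) slack z k.+1,
    \matrix_(k < S, i < C) ydef z k.+1 i.+1, \row_(k < S) edef z k.+1,
    \row_(k < S) xsum z k.+1, \row_(k < S.-1) hold z k.+1 ).

Lemma galgE : galg f_vle f_hl f_holdup nn xh HH e P0 = gmap.
Proof. by apply: funext => -[[[[[]]]]]. Qed.

Definition xtot z j := \sum_(i < C) zx z j i.+1.
Definition ytot z j := \sum_(i < C) zy z j i.+1.

Lemma auxE z j : aux z j =
  (if j == 1%N then zL z 1 * (xtot z 2 - xtot z 1) - zV z 1 * (ytot z 1 - xtot z 1)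
   else if j == S then
     e * zV z S * (xtot z S - ytot z S) + zV z S.-1 * (ytot z S.-1 - xtot z S)
   else zL z j * (xtot z j.+1 - xtot z j) - zV z j * (ytot z j - xtot z j)
          + zV z j.-1 * (ytot z j.-1 - xtot z j)) / nn j.
Proof.
rewrite /aux /xtot /ytot; case: eqP => [->|_]; last case: eqP => [->|_].
all: by rewrite ?big_split /= ?sumrN -?mulr_sumr ?sumrB.
Qed.

Lemma zV_line z v h j : zV (h *: v + z) j = h * zV v j + zV z j.
Proof. exact: (vat_line v.1.1.1.1.1 z.1.1.1.1.1 h j.-1). Qed.
Lemma zs_line z v h j : zs (h *: v + z) j = h * zs v j + zs z j.
Proof. exact: (vat_line v.1.1.1.1.2 z.1.1.1.1.2 h j.-1). Qed.
Lemma zy_line z v h j i : zy (h *: v + z) j i = h * zy v j i + zy z j i.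
Proof. exact: (mat_line v.1.1.1.2 z.1.1.1.2 h j.-1 i.-1). Qed.
Lemma zT_line z v h j : zT (h *: v + z) j = h * zT v j + zT z j.
Proof. exact: (vat_line v.1.1.2 z.1.1.2 h j.-1). Qed.
Lemma zxC_line z v h j : zxC (h *: v + z) j = h * zxC v j + zxC z j.
Proof. exact: (vat_line v.1.2 z.1.2 h j.-1). Qed.
Lemma zL_line z v h j : zL (h *: v + z) j = h * zL v j + zL z j.
Proof. exact: (vat_line v.2 z.2 h j.-1). Qed.

Lemma zx_line_fixed z v h : v.1.2 = 0 -> zx (h *: v + z) = zx z.
Proof.
move=> xC0; apply: funext => j; apply: funext => i.
by rewrite /zx zxC_line {1}/zxC xC0 vat0 mulr0 add0r.
Qed.

Lemma zy_line_fixed z v h : v.1.1.1.2 = 0 -> zy (h *: v + z) = zy z.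
Proof.
move=> y0; apply: funext => j; apply: funext => i.
by rewrite zy_line {1}/zy y0 mat0 mulr0 add0r.
Qed.

Lemma zL_line_fixed z v h : v.2 = 0 -> zL (h *: v + z) = zL z.
Proof. by move=> L0; apply: funext => j; rewrite zL_line {1}/zL L0 vat0 mulr0 add0r. Qed.

(* Only a fraction epsilon of the vapour V^S leaves the top stage. *)
Definition vcoef j := if j == S then e else 1.

Section Linearization.
Variable p : Alg R S C.

Lemma differentiable_zV j : differentiable (zV^~ j) p.
Proof. by apply: differentiable_vat; do 5 apply: differentiable_fst. Qed.
Lemma differentiable_zs j : differentiable (zs^~ j) p.
Proof. by apply: differentiable_vat; apply: differentiable_snd; do 4 apply: differentiable_fst. Qed.
Lemma differentiable_zy j i : differentiable (zy^~ j ^~ i) p.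
Proof. by apply: differentiable_mat; apply: differentiable_snd; do 3 apply: differentiable_fst. Qed.
Lemma differentiable_zT j : differentiable (zT^~ j) p.
Proof. by apply: differentiable_vat; apply: differentiable_snd; do 2 apply: differentiable_fst. Qed.
Lemma differentiable_zL j : differentiable (zL^~ j) p.
Proof. by apply: differentiable_vat; apply: differentiable_snd. Qed.
Lemma differentiable_zx j i : differentiable (zx^~ j ^~ i) p.
Proof.
rewrite /zx; case: (i == C); last exact: differentiable_cst.
by apply: differentiable_vat; apply: differentiable_snd; apply: differentiable_fst.
Qed.

Hypothesis dvle : forall i q, (1 <= i <= C)%N -> differentiable (f_vle i) q.
Hypothesis dhl : forall q, differentiable f_hl q.
Hypothesis dholdup : forall q, differentiable f_holdup q.

Lemma differentiable_zxr j : differentiable (zxr^~ j) p.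
Proof. by rewrite /zxr; apply: differentiable_matrix => _ i; exact: differentiable_zx. Qed.

Lemma differentiable_aux j : differentiable (aux^~ j) p.
Proof.
rewrite /aux; case: eqP => _; [|case: eqP => _];
  apply: differentiableM => //; apply: differentiable_bigsum => i _;
  repeat first [ apply: differentiableB | apply: differentiableD | apply: differentiableM
               | exact: differentiable_zV | exact: differentiable_zy
               | exact: differentiable_zx | exact: differentiable_zL
               | exact: differentiable_cst ].
Qed.

Lemma differentiable_slack j : differentiable (slack^~ j) p.
Proof.
apply: differentiableB; last exact: differentiable_zs.
apply: differentiableB => //; apply: differentiable_bigsum => i _; exact: differentiable_zy.
Qed.

Lemma differentiable_ydef j (i : 'I_C) : differentiable (ydef^~ j ^~ i.+1) p.
Proof.
apply: differentiableB; first exact: differentiable_zy.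
apply: (@differentiable_comp _ _ _ _ (fun z => (P0, zT z j, zxr z j)) (f_vle i.+1)).
  apply: differentiable_pair; last exact: differentiable_zxr.
  by apply: differentiable_pair => //; exact: differentiable_zT.
by apply: dvle; rewrite ltn_ord.
Qed.

Lemma differentiable_edef j : differentiable (edef^~ j) p.
Proof.
apply: differentiableB => //; apply: differentiableM => //.
apply: (@differentiable_comp _ _ _ _ (fun z => (zT z j, zxr z j)) f_hl) => //.
by apply: differentiable_pair; [exact: differentiable_zT | exact: differentiable_zxr].
Qed.

Lemma differentiable_xsum j : differentiable (xsum^~ j) p.
Proof.
apply: differentiableD; first by apply: differentiableB => //; exact: differentiable_zx.
by apply: differentiable_bigsum => i _; exact: differentiable_zx.
Qed.

Lemma differentiable_hold j : differentiable (hold^~ j) p.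
Proof.
apply: differentiableB => //.
by apply: (@differentiable_comp _ _ _ _ (zL^~ j) f_holdup); first exact: differentiable_zL.
Qed.

Lemma diff_gmap v : 'd gmap p v =
  ( \row_(k < S) 'd (aux^~ k.+1) p v, \row_(k < S) 'd (slack^~ k.+1) p v,
    \matrix_(k < S, i < C) 'd (ydef^~ k.+1 ^~ i.+1) p v, \row_(k < S) 'd (edef^~ k.+1) p v,
    \row_(k < S) 'd (xsum^~ k.+1) p v, \row_(k < S.-1) 'd (hold^~ k.+1) p v ).
Proof.
have d1 : differentiable (fun z => \row_(k < S) aux z k.+1) p.
  by apply: differentiable_matrix => _ k; exact: differentiable_aux.
have d2 : differentiable (fun z => \row_(k < S) slack z k.+1) p.
  by apply: differentiable_matrix => _ k; exact: differentiable_slack.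
have d3 : differentiable (fun z => \matrix_(k < S, i < C) ydef z k.+1 i.+1) p.
  by apply: differentiable_matrix => k i; exact: differentiable_ydef.
have d4 : differentiable (fun z => \row_(k < S) edef z k.+1) p.
  by apply: differentiable_matrix => _ k; exact: differentiable_edef.
have d5 : differentiable (fun z => \row_(k < S) xsum z k.+1) p.
  by apply: differentiable_matrix => _ k; exact: differentiable_xsum.
have d6 : differentiable (fun z => \row_(k < S.-1) hold z k.+1) p.
  by apply: differentiable_matrix => _ k; exact: differentiable_hold.
have d12 := differentiable_pair d1 d2; have d13 := differentiable_pair d12 d3.
have d14 := differentiable_pair d13 d4; have d15 := differentiable_pair d14 d5.
rewrite /gmap (diff_pair d15 d6) (diff_pair d14 d5) (diff_pair d13 d4).
rewrite (diff_pair d12 d3) (diff_pair d1 d2).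
congr (_, _, _, _, _, _); apply: diff_matrix.
- by move=> _ k; exact: differentiable_aux.
- by move=> _ k; exact: differentiable_slack.
- by move=> k i; exact: differentiable_ydef.
- by move=> _ k; exact: differentiable_edef.
- by move=> _ k; exact: differentiable_xsum.
- by move=> _ k; exact: differentiable_hold.
Qed.

Lemma diff_xsum v j : 'd (xsum^~ j) p v = zxC v j.
Proof.
apply: diff_affine_line => [|h]; first exact: differentiable_xsum.
have xh_sum z : \sum_(i < C | (i < C.-1)%N) zx z j i.+1 = \sum_(i < C | (i < C.-1)%N) xh j i.+1.
  by apply: eq_bigr => i ltiC; rewrite /zx; case: eqP => // iC; lia.
rewrite /xsum !xh_sum /zx eqxx zxC_line; ring.
Qed.

Lemma diff_hold v j : 'd (hold^~ j) p v = - (zL v j * derive1 f_holdup (zL p j)).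
Proof.
rewrite diff_line; last exact: differentiable_hold.
have -> : (fun h => hold (h *: v + p) j) =
          (fun h => nn j.+1 - 1 * f_holdup (zL p j + h * zL v j)).
  by apply: funext => h; rewrite /hold zL_line mul1r [h * _ + _]addrC.
by rewrite (@derive1_affine_comp _ f_holdup (zL p j) (zL v j) (nn j.+1) 1) // mul1r.
Qed.

Lemma diff_edef v j : v.1.2 = 0 ->
  'd (edef^~ j) p v = - (nn j * (zT v j * derive1 (fun T' => f_hl (T', zxr p j)) (zT p j))).
Proof.
move=> xC0; rewrite diff_line; last exact: differentiable_edef.
pose fT T' := f_hl (T', zxr p j).
have -> : (fun h => edef (h *: v + p) j) = (fun h => HH j - nn j * fT (zT p j + h * zT v j)).
  by apply: funext => h; rewrite /edef /zxr zx_line_fixed // zT_line [h * _ + _]addrC.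
rewrite (@derive1_affine_comp _ fT (zT p j) (zT v j) (HH j) (nn j)) //.
exact: (@differentiable_comp _ _ _ _ (fun T' => (T', zxr p j)) f_hl).
Qed.

Lemma diff_ydef v j (i : 'I_C) : v.1.2 = 0 -> v.1.1.2 = 0 ->
  'd (ydef^~ j ^~ i.+1) p v = zy v j i.+1.
Proof.
move=> xC0 T0; apply: diff_affine_line => [|h]; first exact: differentiable_ydef.
rewrite /ydef /zxr zx_line_fixed // zy_line zT_line {1}/zT T0 vat0 mulr0 add0r; ring.
Qed.

Lemma diff_slack v j : 'd (slack^~ j) p v = \sum_(i < C) zy v j i.+1 - zs v j.
Proof.
apply: diff_affine_line => [|h]; first exact: differentiable_slack.
rewrite /slack zs_line; under eq_bigr do rewrite zy_line.
rewrite big_split /= -mulr_sumr; ring.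
Qed.

Hypothesis hS : (2 <= S)%N.
Hypothesis hC : (0 < C)%N.
Hypothesis gp0 : gmap p = 0.

Lemma xtot_eq1 j : (1 <= j <= S)%N -> xtot p j = 1.
Proof.
case: j => [//|k] /andP[_ kS].
have := congr1 (fun w : Eqs R S C => w.1.2 ord0 (Ordinal kS)) gp0.
rewrite /= !mxE /xsum /xtot (sum_split_last (fun i => zx p k.+1 i)) //=.
move=> E; lra.
Qed.

Lemma ytotE j : (1 <= j <= S)%N -> ytot p j = 1 + zs p j.
Proof.
case: j => [//|k] /andP[_ kS].
have := congr1 (fun w : Eqs R S C => w.1.1.1.1.2 ord0 (Ordinal kS)) gp0.
rewrite /= !mxE /slack /ytot /= => E; lra.
Qed.

Lemma diff_aux v j : v.1.2 = 0 -> v.1.1.1.2 = 0 -> v.2 = 0 -> (1 <= j <= S)%N ->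
  'd (aux^~ j) p v =
  ((if j == 1%N then 0 else zV v j.-1 * zs p j.-1) - vcoef j * zV v j * zs p j) / nn j.
Proof.
move=> xC0 y0 L0 /andP[j1 jS].
apply: diff_affine_line => [|h]; first exact: differentiable_aux.
have xtf : xtot (h *: v + p) = xtot p by rewrite /xtot zx_line_fixed.
have ytf : ytot (h *: v + p) = ytot p by rewrite /ytot zy_line_fixed.
rewrite !auxE xtf ytf zL_line_fixed // !zV_line /vcoef.
case: eqP => [->|/eqP jn1].
  rewrite ifF; last by apply/eqP; lia.
  by rewrite !xtot_eq1 ?ytotE //; (ring || lia).
case: eqP => [jeS|jnS].
  by rewrite jeS !xtot_eq1 ?ytotE //; (ring || lia).
by rewrite !xtot_eq1 ?ytotE //; (ring || lia).
Qed.

Hypothesis hn : forall j, (1 <= j <= S)%N -> nn j != 0.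
Hypothesis he : e != 0.
Hypothesis hhl0 : forall j, (1 <= j <= S)%N ->
  derive1 (fun T' => f_hl (T', zxr p j)) (zT p j) != 0.
Hypothesis hholdup0 : forall j, (1 <= j <= S.-1)%N -> derive1 f_holdup (zL p j) != 0.

Lemma vcoef_neq0 j : vcoef j != 0.
Proof. by rewrite /vcoef; case: (j == S); rewrite ?oner_eq0. Qed.

Lemma diff_gmap_ker0 : (forall j, (1 <= j <= S)%N -> zs p j != 0) ->
  forall v, 'd gmap p v = 0 -> v = 0.
Proof.
move=> hs v; rewrite diff_gmap => -[/rowP Daux /rowP Dslack /matrixP Dydef /rowP Dedef
                                     /rowP Dxsum /rowP Dhold].
have xC0 : v.1.2 = 0.
  apply/rowP => k; rewrite mxE -vatE; change (zxC v k.+1 = 0).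
  by have := Dxsum k; rewrite !mxE diff_xsum.
have L0 : v.2 = 0.
  apply/rowP => k; rewrite mxE -vatE; change (zL v k.+1 = 0).
  have hk : (1 <= k.+1 <= S.-1)%N by rewrite ltn_ord.
  have /eqP := Dhold k; rewrite !mxE diff_hold oppr_eq0 mulf_eq0.
  by rewrite (negbTE (hholdup0 hk)) orbF => /eqP.
have T0 : v.1.1.2 = 0.
  apply/rowP => k; rewrite mxE -vatE; change (zT v k.+1 = 0).
  have hk : (1 <= k.+1 <= S)%N by rewrite ltn_ord.
  have /eqP := Dedef k; rewrite !mxE diff_edef // oppr_eq0 !mulf_eq0.
  by rewrite (negbTE (hn hk)) (negbTE (hhl0 hk)) orbF => /eqP.
have y0 : v.1.1.1.2 = 0.
  apply/matrixP => k i; rewrite mxE -matE; change (zy v k.+1 i.+1 = 0).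
  by have := Dydef k i; rewrite !mxE diff_ydef.
have s0 : v.1.1.1.1.2 = 0.
  apply/rowP => k; rewrite mxE -vatE; change (zs v k.+1 = 0).
  have := Dslack k; rewrite !mxE diff_slack big1 ?sub0r => [/eqP|i _].
    by rewrite oppr_eq0 => /eqP.
  by rewrite /zy y0 mat0.
have Vs0 : forall j, (1 <= j <= S)%N -> zV v j * zs p j = 0.
  apply: (bidiagonal_eq0 (c := vcoef)) => [j _|j hj]; first exact: vcoef_neq0.
  case: j hj => [//|k] hk; have kS : (k < S)%N by case/andP: hk.
  have := Daux (Ordinal kS); rewrite !mxE diff_aux // => /eqP.
  by rewrite mulf_eq0 invr_eq0 (negbTE (hn hk)) orbF subr_eq0 => /eqP ->; rewrite mulrA.
have V0 : v.1.1.1.1.1 = 0.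
  apply/rowP => k; rewrite mxE -vatE; change (zV v k.+1 = 0).
  have hk : (1 <= k.+1 <= S)%N by rewrite ltn_ord.
  by have /eqP := Vs0 _ hk; rewrite mulf_eq0 (negbTE (hs _ hk)) orbF => /eqP.
by case: v {Daux Dslack Dydef Dedef Dxsum Dhold Vs0} xC0 L0 T0 y0 s0 V0
  => [[[[[? ?] ?] ?] ?] ?] /= -> -> -> -> -> ->.
Qed.

Lemma diff_gmap_singular j0 : (1 <= j0 <= S)%N -> zs p j0 = 0 ->
  exists2 v, v != 0 & 'd gmap p v = 0.
Proof.
move=> hj0 sj0.
pose v : Alg R S C := (\row_(k < S) (k.+1 == j0)%:R, 0, 0, 0, 0, 0).
have Vs0 j : zV v j * zs p j = 0.
  rewrite /zV /vat; case: insubP => [k _ kj|_]; rewrite ?mxE ?mul0r //.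
  case: eqP => [kj0|_]; last by rewrite mul0r.
  by rewrite mul1r /zs -kj -sj0 -kj0.
exists v.
  have j0S : (j0.-1 < S)%N by lia.
  apply/eqP => /(congr1 (fun w => zV w j0)); rewrite /zV vat0 /=.
  rewrite (vat_row (fun n => (n.+1 == j0)%:R) j0S) prednK ?eqxx; last by lia.
  by apply/eqP; exact: oner_neq0.
rewrite (diff_gmap v); congr (_, _, _, _, _, _); apply/matrixP => k i; rewrite !mxE.
- by rewrite diff_aux // ?ltn_ord // -mulrA !Vs0 mulr0 if_same subrr mul0r.
- by rewrite diff_slack big1 => [|l _]; rewrite /zy /zs ?mat0 ?vat0 ?subrr.
- by rewrite diff_ydef // /zy mat0.
- by rewrite diff_edef // /zT vat0 !mul0r mulr0 oppr0.
- by rewrite diff_xsum /zxC vat0.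
- by rewrite diff_hold /zL vat0 mul0r oppr0.
Qed.

Theorem diff_gmap_bijectiveP :
  bijective ('d gmap p) <-> forall j, (1 <= j <= S)%N -> zs p j != 0.
Proof.
split=> [/bij_inj inj j hj|hs]; last exact/linear_bijective_of_ker0/diff_gmap_ker0.
apply/eqP => sj0; have [v + Dv] := diff_gmap_singular hj sj0.
by rewrite (inj v 0) ?eqxx // Dv linear0.
Qed.

End Linearization.
End Jacobian.

Section Trajectory.
Variables (R : realType) (S C : nat) (V s T L : nat -> R -> R) (x y : nat -> nat -> R -> R).
Variable t : R.
Let p := zeta_alg S C V s T L x y t.

Lemma zs_zeta j : (1 <= j <= S)%N -> zs p j = s j t.
Proof. by case: j => [//|j] /andP[_ jS]; exact: (vat_row (fun k => s k.+1 t)). Qed.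

Lemma zT_zeta j : (1 <= j <= S)%N -> zT p j = T j t.
Proof. by case: j => [//|j] /andP[_ jS]; exact: (vat_row (fun k => T k.+1 t)). Qed.

Lemma zL_zeta j : (1 <= j <= S.-1)%N -> zL p j = L j t.
Proof. by case: j => [//|j] /andP[_ jS]; exact: (vat_row (fun k => L k.+1 t)). Qed.

Lemma zxr_zeta j : (1 <= j <= S)%N ->
  zxr (fun j i => x j i t) p j = \row_(i < C) x j i.+1 t.
Proof.
case: j => [//|j] /andP[_ jS]; apply/rowP => i; rewrite !mxE /zx.
by case: eqP => // ->; exact: (vat_row (fun k => x k.+1 C t)).
Qed.

End Trajectory.

Theorem mainTheorem8 (R : realType) (S C : nat) (hS : (2 <= S)%N) (hC : (2 <= C)%N)
  (I : set R) (hI : is_interval I)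
  (f_vle : nat -> (R * R * 'rV[R]_C)%type -> R)
  (f_hl f_hv : (R * 'rV[R]_C)%type -> R) (f_holdup : R -> R)
  (Hvle : forall i, (1 <= i <= C)%N -> C1 (f_vle i))
  (Hhl : C1 f_hl) (Hhv : C1 f_hv) (Hholdup : C1 f_holdup)
  (eps P Q Tcond : R -> R)
  (Heps : C1_on I eps) (HP : C1_on I P) (HQ : C1_on I Q) (HTc : C1_on I Tcond)
  (n H T V s : nat -> R -> R) (x y : nat -> nat -> R -> R) (L : nat -> R -> R)
  (Hsol : solution_R S f_vle f_hl f_hv f_holdup I eps P Q Tcond n H T V s x y L)
  (Heps0 : forall t, I t -> eps t != 0)
  (Hn0 : forall t, I t -> forall j, (1 <= j <= S)%N -> n j t != 0)
  (Hhl0 : forall t, I t -> forall j, (1 <= j <= S)%N ->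
     derive1 (fun T' => f_hl (T', \row_(i < C) x j i.+1 t)) (T j t) != 0)
  (Hhold0 : forall t, I t -> forall j, (1 <= j <= S.-1)%N ->
     derive1 f_holdup (L j t) != 0) :
  (forall t, I t ->
     bijective ('d (@galg R S C f_vle f_hl f_holdup
                      (fun j => n j t) (fun j i => x j i t) (fun j => H j t)
                      (eps t) (P t))
                   (zeta_alg S C V s T L x y t)))
  <->
  (forall t, I t -> forall j, (1 <= j <= S)%N -> s j t != 0).
Proof.
have [_ [_ [_ [_ [_ [_ [_ [_ [_ [_ g0]]]]]]]]]] := Hsol.
suff bijP t : I t -> bijective ('d (galg f_vle f_hl f_holdup (fun j => n j t)
      (fun j i => x j i t) (fun j => H j t) (eps t) (P t)) (zeta_alg S C V s T L x y t))
    <-> (forall j, (1 <= j <= S)%N -> s j t != 0).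
  by split=> h t It; apply/(bijP t It); exact: h.
move=> It; rewrite galgE diff_gmap_bijectiveP //.
- by split=> h j hj; have := h j hj; rewrite zs_zeta.
- by move=> i q hi; exact: (Hvle i hi).1.
- exact: Hhl.1.
- exact: Hholdup.1.
- exact: ltnW.
- by rewrite -galgE; exact: g0.
- exact: Hn0.
- exact: Heps0.
- by move=> j hj; rewrite zxr_zeta // zT_zeta //; exact: Hhl0.
- by move=> j hj; rewrite zL_zeta //; exact: Hhold0.
Qed.
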